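(* Let $N,K\ge 1$ be integers, $\mathbf{g}\in\mathbb{C}^{N}$, $\mathbf{h}_{r,k}\in\mathbb{C}^{N}$ and $h_{d,k}\in\mathbb{C}$ for $k=1,\dots,K$, with all entries of $\mathbf{g}$ and of every $\mathbf{h}_{r,k}$ nonzero and every $h_{d,k}\neq 0$. Let $\sigma^2>0$, $\sigma_r^2>0$, $P_r>0$, $T_{\max}>0$ and $E_k>0$ ($k=1,\dots,K$). Put $\mathbf{q}_k=\mathrm{diag}(\mathbf{g}^H)\mathbf{h}_{r,k}$, $\mathbf{G}=\mathrm{diag}(|[\mathbf{g}]_1|^2,\dots,|[\mathbf{g}]_N|^2)$, $\mathbf{H}_{r,k}=\mathrm{diag}(|[\mathbf{h}_{r,k}]_1|^2,\dots,|[\mathbf{h}_{r,k}]_N|^2)$. Consider the problem $$\max_{\{\tau_k\},\{p_k\},\{\mathbf{v}_k\}}\ \sum_{k=1}^K \tau_k\log_2\!\Big(1+\frac{p_k|h_{d,k}+\mathbf{v}_k^H\mathbf{q}_k|^2}{\sigma^2+\sigma_r^2\mathbf{v}_k^H\mathbf{G}\mathbf{v}_k}\Big)$$ over $\tau_k\in\mathbb{R}$, $p_k\in\mathbb{R}$, $\mathbf{v}_k\in\mathbb{C}^N$, subject to $\tau_kp_k\le E_k$ for all $k$; $\sum_{k=1}^K\tau_k\le T_{\max}$; $\tau_k\ge 0,\ p_k\ge0$ for all $k$; and $p_k\mathbf{v}_k^H\mathbf{H}_{r,k}\mathbf{v}_k+\sigma_r^2\|\mathbf{v}_k\|^2\le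 P_r$ for all $k$. Then at any optimal solution of this problem, $\tau_kp_k=E_k$ for every $k\in\{1,\dots,K\}$.
   Context: This is the sum-throughput maximization for active-IRS-aided TDMA uplink: device $k$ transmits for time $\tau_k$ with power $p_k$ and available energy $E_k$; $\mathbf{v}_k$ is the IRS reflection/amplification vector used in device $k$'s slot; $P_r$ is the IRS amplification power budget. *)

From HB Require Import structures.
From mathcomp Require Import all_boot all_order all_algebra.
From mathcomp Require Import reals exp.
From mathcomp Require Import complex.
Set Implicit Arguments. Unset Strict Implicit. Unset Printing Implicit Defensive.
Import Order.TTheory GRing.Theory Num.Theory ComplexField.
Local Open Scope ring_scope.
Local Open Scope complex_scope.

Definition cabs2 {R : rcfType} (z : R[i]) : R := (complex.Re z) ^+ 2 + (complex.Im z) ^+ 2.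

Definition log2 {R : realType} (x : R) : R := ln x / ln 2.

Definition hdot {R : rcfType} (N : nat) (a b : 'I_N -> R[i]) : R[i] :=
  \sum_(i < N) (a i)^* * b i.

(* q_k = diag(g^H) h_{r,k}, i.e. [q_k]_i = conj(g_i) * [h_{r,k}]_i *)
Definition qvec {R : rcfType} (N : nat) (g hr : 'I_N -> R[i]) : 'I_N -> R[i] :=
  fun i => (g i)^* * hr i.

(* v^H diag(|w_1|^2,...,|w_N|^2) v = sum_i |w_i|^2 |v_i|^2 *)
Definition wquad {R : rcfType} (N : nat) (w v : 'I_N -> R[i]) : R :=
  \sum_(i < N) cabs2 (w i) * cabs2 (v i).

Definition nrm2 {R : rcfType} (N : nat) (v : 'I_N -> R[i]) : R :=
  \sum_(i < N) cabs2 (v i).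

Section Problem.
Variables (R : realType) (N K : nat).
Variables (g : 'I_N -> R[i]) (hr : 'I_K -> 'I_N -> R[i]) (hd : 'I_K -> R[i]).
Variables (sigma2 sigmar2 Pr Tmax : R) (E : 'I_K -> R).

Definition snr (p : 'I_K -> R) (v : 'I_K -> 'I_N -> R[i]) (k : 'I_K) : R :=
  p k * cabs2 (hd k + hdot (v k) (qvec g (hr k)))
  / (sigma2 + sigmar2 * wquad g (v k)).

Definition throughput (tau p : 'I_K -> R) (v : 'I_K -> 'I_N -> R[i]) : R :=
  \sum_(k < K) tau k * log2 (1 + snr p v k).

Definition feasible (tau p : 'I_K -> R) (v : 'I_K -> 'I_N -> R[i]) : Prop :=
  (forall k, tau k * p k <= E k) /\
  (\sum_(k < K) tau k <= Tmax) /\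
  (forall k, 0 <= tau k /\ 0 <= p k) /\
  (forall k, p k * wquad (hr k) (v k) + sigmar2 * nrm2 (v k) <= Pr).

Definition optimal (tau p : 'I_K -> R) (v : 'I_K -> 'I_N -> R[i]) : Prop :=
  feasible tau p v /\
  forall tau' p' v', feasible tau' p' v' -> throughput tau' p' v' <= throughput tau p v.
End Problem.

From HB Require Import structures.
From mathcomp Require Import all_boot all_order all_algebra.
From mathcomp Require Import reals exp.
From mathcomp Require Import complex.
From mathcomp Require Import lra ring.
Set Implicit Arguments. Unset Strict Implicit. Unset Printing Implicit Defensive.
Import Order.TTheory GRing.Theory Num.Theory ComplexField.
Local Open Scope ring_scope.
Local Open Scope complex_scope.

(* At a feasible point with [tau_k p_k < E_k] the throughput can be strictly
   increased, so such a point is not optimal.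

   If [tau_k > 0], the spare energy is spent in the slot of device [k]. When
   [p_k = 0], the device transmits with power [E_k / tau_k] and the IRS off.
   Otherwise [v_k] becomes [c v_k] and [p_k] becomes [p_k / c^2] with
   [0 < c^2 <= 1]: the IRS power and the amplified noise do not grow, and the
   received amplitude [|h_d + v^H q|^2] becomes [|h_d / c + v^H q|^2]. Since
   [|s z + a|^2 - |z + a|^2 = (s - 1) ((s - 1) |z|^2 + |z + a|^2 + |z|^2 - |a|^2)],
   according to the sign of the last three terms either [c = -1] or
   [c = sqrt (tau_k p_k / E_k) < 1] strictly increases the SNR.

   If [tau_k = 0], device [k] receives a short slot [e], taken from the idle
   time or from a device [j] with [tau_j > 0], with power [E_k / e] and the IRS
   off. Its rate [e log2 (1 + E_k |h_d|^2 / (sigma^2 e))] beats the rate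
   [e log2 (1 + snr_j)] lost by [j] once [e] is small. *)

Lemma sumr_upd1 (V : zmodType) (I : finType) (F G : I -> V) (k : I) :
  (forall i, i != k -> G i = F i) -> \sum_i G i = \sum_i F i - F k + G k.
Proof.
move=> GF; rewrite [in LHS](bigD1 k) //= [in RHS](bigD1 k) //=.
rewrite (eq_bigr F) => [|i /GF //].
by rewrite [F k + _]addrC addrK addrC.
Qed.

Lemma sumr_upd2 (V : zmodType) (I : finType) (F G : I -> V) (j k : I) :
  j != k -> (forall i, i != j -> i != k -> G i = F i) ->
  \sum_i G i = \sum_i F i - F j - F k + G j + G k.
Proof.
move=> jk GF; pose H i := if i == j then G j else F i.
rewrite (sumr_upd1 (F := H) (k := k)) => [|i ik]; last first.
  by rewrite /H; case: eqP => [->|/eqP ij] //; exact: GF.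
rewrite (sumr_upd1 (F := F) (G := H) (k := j)) => [|i /negbTE ij]; last by rewrite /H ij.
by rewrite /H eqxx eq_sym (negbTE jk) [_ + G j - F k]addrAC.
Qed.

Section SquaredModulus.
Variable R : rcfType.
Implicit Types (z w : R[i]) (s t : R).

Lemma cabs2_ge0 z : 0 <= cabs2 z.
Proof. by rewrite addr_ge0 // sqr_ge0. Qed.

Lemma cabs20 : cabs2 (0 : R[i]) = 0.
Proof. by rewrite /cabs2 /= expr0n /= addr0. Qed.

Lemma cabs2_gt0 z : z != 0 -> 0 < cabs2 z.
Proof. by move=> z0; rewrite -ltcR /cabs2 add_Re2_Im2 exprn_gt0 ?normr_gt0. Qed.

Lemma cabs2Z t z : cabs2 (t%:C * z) = t ^+ 2 * cabs2 z.
Proof. by case: z => a b; rewrite /cabs2 /=; ring. Qed.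

Lemma cabs2_scale_add s z w :
  cabs2 (s%:C * z + w) =
  cabs2 (z + w) + (s - 1) * ((s - 1) * cabs2 z + (cabs2 (z + w) + cabs2 z - cabs2 w)).
Proof. by case: z => a b; case: w => c d; rewrite /cabs2 /=; ring. Qed.

Lemma cabs2_flip z w : z != 0 ->
  cabs2 (z + w) + cabs2 z <= cabs2 w -> cabs2 (z + w) < cabs2 (- z + w).
Proof.
move=> /cabs2_gt0 z_gt0 zw_le.
by rewrite -mulN1r -(rmorphN1 (real_complex R)) cabs2_scale_add; nra.
Qed.

Lemma cabs2_stretch s z w : z != 0 -> 1 < s ->
  cabs2 w < cabs2 (z + w) + cabs2 z -> cabs2 (z + w) < cabs2 (s%:C * z + w).
Proof.
move=> /cabs2_gt0 z_gt0 s_gt1 zw_gt.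
rewrite cabs2_scale_add ltrDl mulr_gt0 ?subr_gt0 // addr_gt0 ?subr_gt0 //.
by rewrite mulr_gt0 ?subr_gt0.
Qed.

End SquaredModulus.

Section RealScaling.
Variables (R : rcfType) (n : nat).
Implicit Types (v w : 'I_n -> R[i]) (t : R).

Lemma hdotZ t v w : hdot (fun i => t%:C * v i) w = t%:C * hdot v w.
Proof.
rewrite /hdot mulr_sumr; apply: eq_bigr => i _.
by rewrite rmorphM -mulrA; congr (_ * _); exact: conjc_real.
Qed.

Lemma hdot0 w : hdot (fun=> 0) w = 0.
Proof. by rewrite /hdot big1 // => i _; rewrite rmorph0 mul0r. Qed.

Lemma wquadZ t w v : wquad w (fun i => t%:C * v i) = t ^+ 2 * wquad w v.
Proof. by rewrite /wquad mulr_sumr; apply: eq_bigr => i _; rewrite cabs2Z mulrCA. Qed.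

Lemma wquad0 w : wquad w (fun=> 0) = 0.
Proof. by rewrite /wquad big1 // => i _; rewrite cabs20 mulr0. Qed.

Lemma wquad_ge0 w v : 0 <= wquad w v.
Proof. by rewrite sumr_ge0 // => i _; rewrite mulr_ge0 ?cabs2_ge0. Qed.

Lemma nrm2Z t v : nrm2 (fun i => t%:C * v i) = t ^+ 2 * nrm2 v.
Proof. by rewrite /nrm2 mulr_sumr; apply: eq_bigr => i _; rewrite cabs2Z. Qed.

Lemma nrm20 : nrm2 (fun _ : 'I_n => 0 : R[i]) = 0.
Proof. by rewrite /nrm2 big1 // => i _; rewrite cabs20. Qed.

Lemma nrm2_ge0 v : 0 <= nrm2 v.
Proof. by rewrite sumr_ge0 // => i _; rewrite cabs2_ge0. Qed.

End RealScaling.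

Section Log2.
Variable R : realType.
Implicit Types x y : R.

Lemma log2_gt0 x : 1 < x -> 0 < log2 x.
Proof. by move=> x_gt1; rewrite divr_gt0 // ln_gt0 // ltr1n. Qed.

Lemma ltr_log2 x y : 0 < x -> x < y -> log2 x < log2 y.
Proof.
move=> x_gt0 xy; rewrite ltr_pM2r ?invr_gt0 ?ln_gt0 ?ltr1n //.
by rewrite ltr_ln // posrE // (lt_trans x_gt0).
Qed.

End Log2.

Section Throughput.
Variables (R : realType) (N K : nat).
Variables (g : 'I_N -> R[i]) (hr : 'I_K -> 'I_N -> R[i]) (hd : 'I_K -> R[i]).
Variables (sigma2 sigmar2 Pr Tmax : R) (E : 'I_K -> R).
Hypotheses (sigma2_gt0 : 0 < sigma2) (sigmar2_ge0 : 0 <= sigmar2) (Pr_ge0 : 0 <= Pr).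
Hypotheses (Tmax_gt0 : 0 < Tmax) (hd_neq0 : forall k, hd k != 0).

Local Notation feasible := (feasible hr sigmar2 Pr Tmax E).
Local Notation throughput := (throughput g hr hd sigma2 sigmar2).

Implicit Types (tau p : 'I_K -> R) (v : 'I_K -> 'I_N -> R[i]).
Implicit Types (k : 'I_K) (t q : R) (w : 'I_N -> R[i]).

Definition irs_gain k w : R[i] := hdot w (qvec g (hr k)).

Definition link_snr k q w : R :=
  q * cabs2 (hd k + irs_gain k w) / (sigma2 + sigmar2 * wquad g w).

Definition link_rate k t q w : R := t * log2 (1 + link_snr k q w).

Definition irs_power k q w : R := q * wquad (hr k) w + sigmar2 * nrm2 w.

Definition link_ok k t q w : Prop :=
  [/\ 0 <= t, 0 <= q, t * q <= E k & irs_power k q w <= Pr].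

Definition improvable tau p v : Prop :=
  exists tau' p' v', feasible tau' p' v' /\ throughput tau p v < throughput tau' p' v'.

Lemma throughputE tau p v :
  throughput tau p v = \sum_k link_rate k (tau k) (p k) (v k).
Proof. by []. Qed.

Lemma feasibleE tau p v : feasible tau p v <->
  (forall k, link_ok k (tau k) (p k) (v k)) /\ \sum_k tau k <= Tmax.
Proof.
split=> [[tpE [sum_le [nneg pow]]] | [ok sum_le]].
  split=> // k; have [tau_ge0 p_ge0] := nneg k.
  by split; [| | exact: tpE | exact: pow].
by split; [|split; [|split]] => // k; have [] := ok k.
Qed.

Lemma link_snr_ge0 k q w : 0 <= q -> 0 <= link_snr k q w.
Proof.
move=> q_ge0; rewrite divr_ge0 ?mulr_ge0 ?cabs2_ge0 //.
by rewrite addr_ge0 ?mulr_ge0 ?wquad_ge0 // ltW.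
Qed.

Lemma link_rate_lt k t q w q' w' : 0 < t -> 0 <= q ->
  link_snr k q w < link_snr k q' w' -> link_rate k t q w < link_rate k t q' w'.
Proof.
move=> t_gt0 q_ge0 snr_lt; rewrite ltr_pM2l // ltr_log2 ?ltrD2l //.
by rewrite ltr_pwDl ?link_snr_ge0.
Qed.

Lemma link_snr0 k q : link_snr k q (fun=> 0) = q * cabs2 (hd k) / sigma2.
Proof. by rewrite /link_snr /irs_gain hdot0 addr0 wquad0 mulr0 addr0. Qed.

Lemma irs_power0 k q : irs_power k q (fun=> 0) = 0.
Proof. by rewrite /irs_power wquad0 nrm20 !mulr0 addr0. Qed.

Lemma irs_power_rescale k q c w : c != 0 -> c ^+ 2 <= 1 ->
  irs_power k (q / c ^+ 2) (fun i => c%:C * w i) <= irs_power k q w.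
Proof.
move=> c0 c2_le1; rewrite /irs_power wquadZ nrm2Z mulrA divfK ?sqrf_eq0 //.
by rewrite lerD2l ler_wpM2l // ler_piMl ?nrm2_ge0.
Qed.

(* With [a := irs_gain k w], the new numerator is
   [q / c^2 * |hd + c a|^2 = q * |hd / c + a|^2], and the IRS noise term
   [sigmar2 * c^2 * wquad g w] of the denominator does not grow. *)
Lemma link_snr_rescale k q c w : c != 0 -> c ^+ 2 <= 1 -> 0 < q ->
  cabs2 (hd k + irs_gain k w) < cabs2 ((c^-1)%:C * hd k + irs_gain k w) ->
  link_snr k q w < link_snr k (q / c ^+ 2) (fun i => c%:C * w i).
Proof.
move=> c0 c2_le1 q_gt0 amp_lt.
have c2_gt0 : 0 < c ^+ 2 by rewrite exprn_even_gt0.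
have den_gt0 : 0 < sigma2 + sigmar2 * wquad g w.
  by rewrite (lt_le_trans sigma2_gt0) // lerDl mulr_ge0 ?wquad_ge0.
have den'_gt0 : 0 < sigma2 + sigmar2 * (c ^+ 2 * wquad g w).
  by rewrite (lt_le_trans sigma2_gt0) // lerDl mulr_ge0 // mulr_ge0 ?sqr_ge0 ?wquad_ge0.
have den'_le : sigma2 + sigmar2 * (c ^+ 2 * wquad g w) <= sigma2 + sigmar2 * wquad g w.
  by rewrite lerD2l ler_wpM2l // ler_piMl ?wquad_ge0.
have -> : link_snr k (q / c ^+ 2) (fun i => c%:C * w i) =
    q * cabs2 ((c^-1)%:C * hd k + irs_gain k w) / (sigma2 + sigmar2 * (c ^+ 2 * wquad g w)).
  rewrite /link_snr /irs_gain hdotZ wquadZ.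
  set a := hdot w _.
  have -> : hd k + c%:C * a = c%:C * ((c^-1)%:C * hd k + a).
    by rewrite mulrDr mulrA -rmorphM divff // rmorph1 mul1r.
  by rewrite cabs2Z mulrA divfK ?gt_eqF.
apply: (lt_le_trans (y := q * cabs2 ((c^-1)%:C * hd k + irs_gain k w) /
                         (sigma2 + sigmar2 * wquad g w))).
  by rewrite ltr_pM2r ?invr_gt0 // ltr_pM2l.
apply: ler_wpM2l; first by rewrite mulr_ge0 ?cabs2_ge0 ?ltW.
by rewrite lef_pV2 ?posrE.
Qed.

Lemma full_energy_link_ok k e : 0 < e -> 0 <= E k ->
  link_ok k e (E k / e) (fun=> 0).
Proof.
move=> e_gt0 Ek_ge0; split; first exact: ltW.
- by rewrite divr_ge0 // ltW.
- by rewrite mulrC divfK ?gt_eqF.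
- by rewrite irs_power0.
Qed.

Lemma better_link k t q w : 0 < t -> 0 <= q -> t * q < E k ->
  irs_power k q w <= Pr ->
  exists q' w', link_ok k t q' w' /\ link_snr k q w < link_snr k q' w'.
Proof.
move=> t_gt0; rewrite le_eqVlt eq_sym => /predU1P[-> | q_gt0] tq_lt pow_le.
  rewrite mulr0 in tq_lt.
  exists (E k / t), (fun=> 0); split; first exact: full_energy_link_ok (ltW _).
  rewrite link_snr0 /link_snr !mul0r divr_gt0 //.
  by rewrite mulr_gt0 ?divr_gt0 ?cabs2_gt0.
have [flip | stretch] := lerP (cabs2 (hd k + irs_gain k w) + cabs2 (hd k)) (cabs2 (irs_gain k w)).
  have sqrN1 : (-1 : R) ^+ 2 = 1 by rewrite sqrrN expr1n.
  have N1_neq0 : (-1 : R) != 0 by rewrite oppr_eq0 oner_eq0.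
  exists (q / (-1) ^+ 2), (fun i => (-1)%:C * w i); split.
    split; first exact: ltW.
    - by rewrite sqrN1 divr1 ltW.
    - by rewrite sqrN1 divr1 ltW.
    - by apply: le_trans pow_le; rewrite irs_power_rescale ?sqrN1.
  apply: link_snr_rescale; rewrite ?sqrN1 //.
  by rewrite invrN1 rmorphN1 mulN1r cabs2_flip.
(* [c^2 = t q / E k] makes the new energy [t * (q / c^2)] exactly [E k]. *)
pose r := t * q / E k; pose c := Num.sqrt r.
have r_gt0 : 0 < r by rewrite divr_gt0 ?mulr_gt0 // (lt_trans _ tq_lt) ?mulr_gt0.
have c_gt0 : 0 < c by rewrite sqrtr_gt0.
have c2 : c ^+ 2 = r by rewrite sqr_sqrtr ?ltW.
have c2_le1 : c ^+ 2 <= 1 by rewrite c2 ler_pdivrMr ?mul1r ?ltW // (lt_trans _ tq_lt) ?mulr_gt0.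
exists (q / c ^+ 2), (fun i => c%:C * w i); split.
  split; first exact: ltW.
  - by rewrite divr_ge0 ?sqr_ge0 // ltW.
  - by rewrite c2 /r mulrA invf_div mulrC divfK ?mulf_neq0 ?gt_eqF.
  - by apply: le_trans pow_le; rewrite irs_power_rescale ?gt_eqF.
apply: link_snr_rescale; rewrite ?gt_eqF //.
apply: cabs2_stretch => //; rewrite invf_gt1 //.
by rewrite -sqrtr1 ltr_sqrt // ltr_pdivrMr ?mul1r // (lt_trans _ tq_lt) ?mulr_gt0.
Qed.

Lemma improvable_upd tau p v k t q w : feasible tau p v -> link_ok k t q w ->
  \sum_i tau i - tau k + t <= Tmax ->
  link_rate k (tau k) (p k) (v k) < link_rate k t q w -> improvable tau p v.
Proof.
move=> /feasibleE[ok _] ok_k sum_le rate_lt.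
exists [eta tau with k |-> t], [eta p with k |-> q], [eta v with k |-> w]; split.
  apply/feasibleE; split=> [i /=|]; first by case: eqP => [->|].
  by rewrite (sumr_upd1 (F := tau) (k := k)) /= ?eqxx // => i /negbTE ->.
rewrite !throughputE [X in _ < X](sumr_upd1 (F := fun i => link_rate i (tau i) (p i) (v i)) (k := k)).
  by rewrite /= eqxx -addrA ltrDl addrC subr_gt0.
by move=> i /negbTE /= ->.
Qed.

Lemma improvable_transfer tau p v j k e q w : j != k -> feasible tau p v ->
  0 <= e <= tau j -> link_ok k (tau k + e) q w ->
  link_rate j (tau j) (p j) (v j) + link_rate k (tau k) (p k) (v k) <
    link_rate j (tau j - e) (p j) (v j) + link_rate k (tau k + e) q w ->
  improvable tau p v.
Proof.
move=> jk /feasibleE[ok sum_le] /andP[e_ge0 e_le] ok_k rate_lt.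
exists [eta tau with k |-> tau k + e, j |-> tau j - e], [eta p with k |-> q],
  [eta v with k |-> w]; split.
  apply/feasibleE; split=> [i /=|].
    case: eqP => [-> //|_]; case: eqP => [-> | _] //.
    have [tau_ge0 p_ge0 tp_le pow_le] := ok j; split; rewrite ?subr_ge0 //.
    by rewrite (le_trans _ tp_le) // ler_wpM2r // gerBl.
  rewrite (sumr_upd2 (F := tau) jk) => [|i /negbTE ij /negbTE ik]; last by rewrite /= ij ik.
  by rewrite /= !eqxx (negbTE jk); lra.
rewrite !throughputE [X in _ < X](sumr_upd2 (F := fun i => link_rate i (tau i) (p i) (v i)) jk).
  by rewrite /= !eqxx (negbTE jk); lra.
by move=> i /negbTE ij /negbTE ik; rewrite /= ij ik.
Qed.

Lemma link_rate_full k e :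
  link_rate k e (E k / e) (fun=> 0) = e * log2 (1 + E k * cabs2 (hd k) / sigma2 / e).
Proof. by rewrite /link_rate link_snr0; congr (_ * log2 (1 + _)); ring. Qed.

Lemma improvable_idle_slack tau p v k : feasible tau p v -> tau k = 0 -> 0 < E k ->
  \sum_i tau i < Tmax -> improvable tau p v.
Proof.
move=> feas tk0 Ek_gt0 slack; pose d := Tmax - \sum_i tau i.
have d_gt0 : 0 < d by rewrite subr_gt0.
apply: (improvable_upd (t := d) (q := E k / d) (w := fun=> 0) feas).
- exact: full_energy_link_ok (ltW _).
- by rewrite tk0 /d; lra.
rewrite link_rate_full tk0 /link_rate mul0r mulr_gt0 // log2_gt0 // ltrDl.
by rewrite !divr_gt0 ?mulr_gt0 ?cabs2_gt0.
Qed.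

Lemma improvable_idle_transfer tau p v j k : feasible tau p v -> tau k = 0 ->
  0 < E k -> 0 < tau j -> improvable tau p v.
Proof.
move=> feas tk0 Ek_gt0 tj_gt0; have /feasibleE[ok _] := feas.
have jk : j != k by apply: contraTneq tj_gt0 => ->; rewrite tk0 ltxx.
pose X := E k * cabs2 (hd k) / sigma2; pose s := link_snr j (p j) (v j).
have X_gt0 : 0 < X by rewrite divr_gt0 ?mulr_gt0 ?cabs2_gt0.
have s_ge0 : 0 <= s by rewrite link_snr_ge0 //; have [] := ok j.
(* [e <= X / (s + 1)] makes the rate per unit time [log2 (1 + X / e)] of the
   idle link exceed the rate [log2 (1 + s)] of the donor link [j]. *)
pose e := Num.min (tau j) (X / (s + 1)).
have e_gt0 : 0 < e by rewrite lt_min tj_gt0 divr_gt0 // ltr_pwDr.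
have se_lt : s * e < X.
  have : e * (s + 1) <= X by rewrite -ler_pdivlMr ?ltr_pwDr // ge_min lexx orbT.
  nra.
apply: (improvable_transfer (e := e) (q := E k / e) (w := fun=> 0) jk feas).
- by rewrite (ltW e_gt0) ge_min lexx.
- by rewrite tk0 add0r; exact: full_energy_link_ok (ltW _).
rewrite tk0 add0r link_rate_full -/X /link_rate mul0r addr0 -/s mulrBl.
rewrite -addrA ltrDl addrC subr_gt0 ltr_pM2l // ltr_log2 //.
  by rewrite (lt_le_trans ltr01) // lerDl.
by rewrite ltrD2l ltr_pdivlMr.
Qed.

Lemma improvable_idle tau p v k : feasible tau p v -> tau k = 0 -> 0 < E k ->
  improvable tau p v.
Proof.
move=> feas tk0 Ek_gt0; have /feasibleE[ok _] := feas.
have [slack | full] := ltrP (\sum_i tau i) Tmax.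
  exact: improvable_idle_slack feas tk0 Ek_gt0 slack.
have [j /andP[_ tj_gt0]] : exists j, true && (0 < tau j).
  apply: psumr_neq0P => [i _|]; first by have [] := ok i.
  by apply/eqP; rewrite gt_eqF // (lt_le_trans Tmax_gt0).
exact: improvable_idle_transfer feas tk0 Ek_gt0 tj_gt0.
Qed.

Lemma improvable_of_energy_slack tau p v k : feasible tau p v ->
  tau k * p k < E k -> improvable tau p v.
Proof.
move=> feas tp_lt; have /feasibleE[ok sum_le] := feas; have [tau_ge0 p_ge0 _ pow_le] := ok k.
move: tau_ge0; rewrite le_eqVlt eq_sym => /predU1P[tk0 | tk_gt0].
  by apply: (improvable_idle feas tk0); move: tp_lt; rewrite tk0 mul0r.
have [q [w [ok_w snr_lt]]] := better_link tk_gt0 p_ge0 tp_lt pow_le.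
apply: (improvable_upd feas ok_w); first by rewrite subrK.
exact: link_rate_lt.
Qed.

End Throughput.

Theorem lemma1 (R : realType) (N K : nat)
  (g : 'I_N -> R[i]) (hr : 'I_K -> 'I_N -> R[i]) (hd : 'I_K -> R[i])
  (sigma2 sigmar2 Pr Tmax : R) (E : 'I_K -> R) :
  (0 < N)%N -> (0 < K)%N ->
  (forall n, g n != 0) ->
  (forall k n, hr k n != 0) ->
  (forall k, hd k != 0) ->
  0 < sigma2 -> 0 < sigmar2 -> 0 < Pr -> 0 < Tmax ->
  (forall k, 0 < E k) ->
  forall (tau p : 'I_K -> R) (v : 'I_K -> 'I_N -> R[i]),
    optimal g hr hd sigma2 sigmar2 Pr Tmax E tau p v ->
    forall k, tau k * p k = E k.
Proof.
move=> _ _ _ _ hd_neq0 sigma2_gt0 sigmar2_gt0 Pr_gt0 Tmax_gt0 _ tau p v [feas opt] k.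
have /feasibleE[/(_ k)[_ _ tp_le _] _] := feas.
apply/eqP; rewrite eq_le tp_le leNgt; apply/negP => tp_lt.
have [tau' [p' [v' [feas' better]]]] := improvable_of_energy_slack g sigma2_gt0
  (ltW sigmar2_gt0) (ltW Pr_gt0) Tmax_gt0 hd_neq0 feas tp_lt.
by have := lt_le_trans better (opt _ _ _ feas'); rewrite ltxx.
Qed.
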